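(* Let $\omega$ be an antisymmetric bivector. For bundles with connection $(E,\nabla_E)$, $(F,\nabla_F)$ and a bundle map $T:E\to F$, define $Q(T)=T+\frac\lambda2\omega^{ij}\nabla_{Fi}\circ\nabla_j(T)$, where $\nabla_j(T)=\nabla_{Fj}\circ T-T\circ\nabla_{Ej}$. Then $Q(T):Q(E)\to Q(F)$ is a left $A_1$-module map (to order $\lambda$). If $T$ intertwines the connections then $Q(T)=T$, which is an $A_1$-bimodule map. In general, for bundle maps $S:E\to F$ and $T:F\to G$ between bundles with connection, $$Q(T\circ S)=Q(T)\circ Q(S)+\tfrac\lambda2\omega^{ij}\nabla_i(T)\circ\nabla_j(S).$$
   Context: Work over $\mathbb{C}[\lambda]/(\lambda^2)$. $A=C^\infty(M)$, coordinates $x^i$, $a_{,i}=\partial a/\partial x^i$, summation convention. $A_1$: $A[\lambda]/(\lambda^2)$ with $a\bullet b=ab+\frac\lambda2\omega^{ij}a_{,i}b_{,j}$. For a bundle $E$ with connection $\nabla_E$ (components $\nabla_{Ei}$ along $\partial_i$), $Q(E)$ is $E$ (sections, $\lambda$-extended) with $a\bullet e=ae+\frac\lambda2\omega^{ij}a_{,i}\nabla_{Ej}e$ and $e\bullet a=ae-\frac\lambda2\omega^{ij}a_{,i}\nabla_{Ej}e$. A left module map $\phi$ satisfies $\phi(a\bullet e)=a\bullet\phi(e)$. *)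

(* Algebraic (coordinate) model of the setting:
   A = C^oo(M) is modelled by a commutative ring R (with 2 invertible),
   the coordinate derivations a |-> a_{,i} by derivations d i : R -> R (i : 'I_n),
   sections of a bundle E by an R-module E (lmodType R), a connection by
   operators nab i : E -> E (components along d_i) satisfying Leibniz,
   and bundle maps by R-linear maps.  Elements of X[lambda]/(lambda^2) are
   pairs (x0, x1) standing for x0 + lambda x1. *)
From HB Require Import structures.
From mathcomp Require Import all_boot all_order all_algebra.
Set Implicit Arguments. Unset Strict Implicit. Unset Printing Implicit Defensive.
Import GRing.Theory.
Local Open Scope ring_scope.

Section Defs.
Variables (R : comUnitRingType) (n : nat).

Definition half : R := (2%:R)^-1.

Definition is_derivation (d : R -> R) : Prop :=
  (forall a b, d (a + b) = d a + d b) /\ (forall a b, d (a * b) = d a * b + a * d b).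

Definition antisymmetric_bivector (om : 'I_n -> 'I_n -> R) : Prop :=
  forall i j, om i j = - om j i.

Definition is_connection (d : 'I_n -> R -> R) (E : lmodType R) (nab : 'I_n -> E -> E) : Prop :=
  forall i, (forall e f, nab i (e + f) = nab i e + nab i f) /\
            (forall (a : R) e, nab i (a *: e) = d i a *: e + a *: nab i e).

Definition padd (V : zmodType) (x y : V * V) : V * V := (x.1 + y.1, x.2 + y.2).

(* product of A_1 : a * b = ab + lambda/2 omega^{ij} a_{,i} b_{,j} *)
Definition A1_mul (d : 'I_n -> R -> R) (om : 'I_n -> 'I_n -> R) (a b : R * R) : R * R :=
  (a.1 * b.1, a.1 * b.2 + a.2 * b.1
     + \sum_(i < n) \sum_(j < n) half * om i j * d i a.1 * d j b.1).

(* left action on Q(E) : a * e = ae + lambda/2 omega^{ij} a_{,i} nabla_{Ej} e *)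
Definition Q_lact (d : 'I_n -> R -> R) (om : 'I_n -> 'I_n -> R) (E : lmodType R)
    (nab : 'I_n -> E -> E) (a : R * R) (e : E * E) : E * E :=
  (a.1 *: e.1, a.1 *: e.2 + a.2 *: e.1
     + \sum_(i < n) \sum_(j < n) (half * om i j * d i a.1) *: nab j e.1).

(* right action on Q(E) : e * a = ae - lambda/2 omega^{ij} a_{,i} nabla_{Ej} e *)
Definition Q_ract (d : 'I_n -> R -> R) (om : 'I_n -> 'I_n -> R) (E : lmodType R)
    (nab : 'I_n -> E -> E) (e : E * E) (a : R * R) : E * E :=
  (a.1 *: e.1, a.1 *: e.2 + a.2 *: e.1
     - \sum_(i < n) \sum_(j < n) (half * om i j * d i a.1) *: nab j e.1).

Definition nablaT (E F : lmodType R) (nE : 'I_n -> E -> E) (nF : 'I_n -> F -> F)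
    (T : E -> F) (j : 'I_n) (e : E) : F := nF j (T e) - T (nE j e).

Definition QT (om : 'I_n -> 'I_n -> R) (E F : lmodType R) (nE : 'I_n -> E -> E)
    (nF : 'I_n -> F -> F) (T : E -> F) (e : E * E) : F * F :=
  (T e.1, T e.2 + \sum_(i < n) \sum_(j < n) (half * om i j) *: nF i (nablaT nE nF T j e.1)).

Definition lam_ext (E F : lmodType R) (T : E -> F) (e : E * E) : F * F := (T e.1, T e.2).

Definition comp_corr (om : 'I_n -> 'I_n -> R) (E F G : lmodType R) (nE : 'I_n -> E -> E)
    (nF : 'I_n -> F -> F) (nG : 'I_n -> G -> G) (S : E -> F) (T : F -> G)
    (e : E * E) : G * G :=
  (0, \sum_(i < n) \sum_(j < n)
        (half * om i j) *: nablaT nF nG T i (nablaT nE nF S j e.1)).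

End Defs.

(* The correction term of Q(T) involves T only through the tensorial commutators
   nabla_j(T) = nabla_F_j o T - T o nabla_E_j.  Hence the derivative of a that
   nabla_F_i produces on nabla_j(T)(a e) is exactly the discrepancy between
   T (a_{,i} nabla_E_j e) and a_{,i} nabla_F_j (T e), which makes Q(T) left
   A_1-linear; intertwining maps have vanishing commutators, so Q(T) = T; and the
   Leibniz rule nabla_j(T o S) = nabla_j(T) o S + T o nabla_j(S) yields the
   composition formula. *)
From mathcomp Require Import all_boot all_order all_algebra.
Import GRing.Theory.
Local Open Scope ring_scope.
Set Implicit Arguments. Unset Strict Implicit.

Lemma sumr2D (V : zmodType) (I J : Type) (r : seq I) (s : seq J)
    (A B : I -> J -> V) :
  \sum_(i <- r) \sum_(j <- s) A i j + \sum_(i <- r) \sum_(j <- s) B i j =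
  \sum_(i <- r) \sum_(j <- s) (A i j + B i j).
Proof. by rewrite -big_split; apply: eq_bigr => i _; rewrite -big_split. Qed.

Lemma scaler_sumr2 (R : pzRingType) (V : lmodType R) (I J : Type)
    (r : seq I) (s : seq J) (a : R) (A : I -> J -> V) :
  a *: \sum_(i <- r) \sum_(j <- s) A i j = \sum_(i <- r) \sum_(j <- s) a *: A i j.
Proof. by rewrite scaler_sumr; apply: eq_bigr => i _; rewrite scaler_sumr. Qed.

Lemma linear_sum2 (R : pzRingType) (U V : lmodType R) (T : {linear U -> V})
    (I J : Type) (r : seq I) (s : seq J) (A : I -> J -> U) :
  T (\sum_(i <- r) \sum_(j <- s) A i j) = \sum_(i <- r) \sum_(j <- s) T (A i j).
Proof. by rewrite linear_sum; apply: eq_bigr => i _; rewrite linear_sum. Qed.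

Section Connection.
Variables (R : comUnitRingType) (n : nat) (d : 'I_n -> R -> R).
Variables (E : lmodType R) (nab : 'I_n -> E -> E).
Hypothesis hnab : is_connection d nab.

Lemma connectionD i x y : nab i (x + y) = nab i x + nab i y.
Proof. by have [] := hnab i. Qed.

Lemma connectionZ i a x : nab i (a *: x) = d i a *: x + a *: nab i x.
Proof. by have [] := hnab i. Qed.

Lemma connection0 i : nab i 0 = 0.
Proof. by apply: (addrI (nab i 0)); rewrite -connectionD !addr0. Qed.

End Connection.

Section QuantizedMaps.
Variables (R : comUnitRingType) (n : nat) (d : 'I_n -> R -> R).
Variable om : 'I_n -> 'I_n -> R.
Variables (E F G : lmodType R).
Variables (nE : 'I_n -> E -> E) (nF : 'I_n -> F -> F) (nG : 'I_n -> G -> G).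
Hypotheses (hE : is_connection d nE) (hF : is_connection d nF)
  (hG : is_connection d nG).

Lemma nablaTZ (T : {linear E -> F}) j a e :
  nablaT nE nF T j (a *: e) = a *: nablaT nE nF T j e.
Proof.
rewrite /nablaT linearZ (connectionZ hF) (connectionZ hE) linearD !linearZ.
by rewrite opprD addrACA subrr add0r scalerBr.
Qed.

Lemma nablaT_comp (S : {linear E -> F}) (T : {linear F -> G}) j e :
  nablaT nE nG (T \o S) j e = nablaT nF nG T j (S e) + T (nablaT nE nF S j e).
Proof. by rewrite /nablaT linearB /= addrA subrK. Qed.

Lemma QT_lact (T : {linear E -> F}) a e :
  QT om nE nF T (Q_lact d om nE a e) = Q_lact d om nF a (QT om nE nF T e).
Proof.
case: a e => [a1 a2] [e1 e2]; rewrite /QT /Q_lact /=; congr pair.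
  by rewrite linearZ.
rewrite !linearD !linearZ /= linear_sum2 scaler_sumr2 -!addrA; congr (_ + _).
rewrite [RHS]addrCA; congr (_ + _); rewrite !sumr2D.
apply: eq_bigr => i _; apply: eq_bigr => j _.
rewrite linearZ nablaTZ (connectionZ hF) scalerDr scalerA /nablaT scalerBr.
by rewrite addrA [X in X + _]addrC subrK addrC !scalerA mulrC.
Qed.

Section Intertwining.
Variable T : {linear E -> F}.
Hypothesis hT : forall j e, nF j (T e) = T (nE j e).

Lemma QT_intertwining e : QT om nE nF T e = lam_ext T e.
Proof.
rewrite /QT /lam_ext /nablaT; congr pair; rewrite big1 ?addr0 // => i _.
by rewrite big1 // => j _; rewrite hT subrr (connection0 hF) scaler0.
Qed.

Lemma lam_ext_sum_nabla (c : 'I_n -> 'I_n -> R) e :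
  T (\sum_i \sum_j c i j *: nE j e) = \sum_i \sum_j c i j *: nF j (T e).
Proof.
rewrite linear_sum2; apply: eq_bigr => i _; apply: eq_bigr => j _.
by rewrite linearZ hT.
Qed.

Lemma lam_ext_lact a e :
  lam_ext T (Q_lact d om nE a e) = Q_lact d om nF a (lam_ext T e).
Proof.
rewrite /lam_ext /Q_lact !linearD !linearZ.
by rewrite lam_ext_sum_nabla.
Qed.

Lemma lam_ext_ract a e :
  lam_ext T (Q_ract d om nE e a) = Q_ract d om nF (lam_ext T e) a.
Proof.
rewrite /lam_ext /Q_ract linearB !linearD !linearZ.
by rewrite lam_ext_sum_nabla.
Qed.

End Intertwining.

Lemma QT_comp (S : {linear E -> F}) (T : {linear F -> G}) e :
  QT om nE nG (T \o S) e =
  padd (QT om nF nG T (QT om nE nF S e)) (comp_corr om nE nF nG S T e).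
Proof.
case: e => e1 e2; rewrite /QT /padd /comp_corr /=; congr pair; first by rewrite addr0.
rewrite linearD linear_sum2 -!addrA; congr (_ + _); rewrite !sumr2D.
apply: eq_bigr => i _; apply: eq_bigr => j _.
rewrite linearZ -!scalerDr nablaT_comp (connectionD hG) [in RHS]addrCA.
by congr (_ *: (_ + _)); rewrite /nablaT addrC subrK.
Qed.

End QuantizedMaps.

Theorem lemma3p2 (R : comUnitRingType) (n : nat)
  (h2 : (2%:R : R) \is a GRing.unit)
  (d : 'I_n -> R -> R) (hd : forall i, is_derivation (d i))
  (om : 'I_n -> 'I_n -> R) (hom : antisymmetric_bivector om)
  (E F G : lmodType R)
  (nE : 'I_n -> E -> E) (nF : 'I_n -> F -> F) (nG : 'I_n -> G -> G)
  (hE : is_connection d nE) (hF : is_connection d nF) (hG : is_connection d nG) :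
  (forall T : {linear E -> F}, forall (a : R * R) (e : E * E),
     QT om nE nF T (Q_lact d om nE a e) = Q_lact d om nF a (QT om nE nF T e))
  /\
  (forall T : {linear E -> F},
     (forall (j : 'I_n) (e : E), nF j (T e) = T (nE j e)) ->
     (forall e, QT om nE nF T e = lam_ext T e) /\
     (forall (a : R * R) (e : E * E),
        lam_ext T (Q_lact d om nE a e) = Q_lact d om nF a (lam_ext T e) /\
        lam_ext T (Q_ract d om nE e a) = Q_ract d om nF (lam_ext T e) a))
  /\
  (forall (S : {linear E -> F}) (T : {linear F -> G}) (e : E * E),
     QT om nE nG (T \o S) e =
     padd (QT om nF nG T (QT om nE nF S e)) (comp_corr om nE nF nG S T e)).
Proof.
split; [exact: QT_lact | split; last exact: QT_comp].
move=> T hT; split; first exact: QT_intertwining.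
by move=> a e; split; [exact: lam_ext_lact | exact: lam_ext_ract].
Qed.
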